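(* Let $T=(t_{ij})$ be an $\mathbb{N}$-tableau of shape $\lambda$, let $\widehat{T}=(\widehat{t}_{ij})$ be its image under the toggle map, and let $U_T=(u_{ijk})$ be the array defined in the context. Let $(i,j)$ be a box of $\lambda$ and let $m$ be the unique natural number such that $(i+m,j+m)$ is a border box of $\lambda$. Then $\widehat{t}_{ij}=u_{i+m,j+m,m+1}$.
   Context: Partitions are drawn in English notation with matrix coordinates: the box in row $i$ and column $j$ is $(i,j)$. An $\mathbb{N}$-tableau of shape $\lambda$ is an assignment of a nonnegative integer to each box of $\lambda$. A border box of $\lambda$ is a box $(i,j)$ such that $(i+1,j+1)$ is not a box; a corner box is a box $(i,j)$ such that neither $(i+1,j)$ nor $(i,j+1)$ is a box. The toggle map $T\mapsto\widehat{T}$ is defined recursively: $\widehat{\emptyset}=\emptyset$; if $T'$ is obtained from $T$ by adding a corner box $(i,j)$ (of $\mathrm{sh}(T')$) with entry $x$, then $\widehat{T'}$ is obtained from $\widehat{T}$ as follows. For $k\ge1$ let $\beta_k,\gamma_k,\alpha_k$ be the entries of $\widehat{T}$ at $(i-k,j-k)$, $(i-k+1,j-k)$, $(i-k,j-k+1)$ respectively (taken to be $0$ if the box is not in $\mathrm{sh}(T)$). Then $\widehat{T'}$ agrees with $\widehat{T}$ except that for $1\le k<\min(i,j)$ the entry at $(i-k,j-k)$ becomes $\max(\alpha_{k+1},\gamma_{k+1})+\min(\alpha_k,\gamma_k)-\beta_k$, and the entry at $(i,j)$ is $\max(\alpha_1,\gamma_1)+x$. This is independent of the order in which boxes are added.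 The array $U_T=(u_{ijk})$ is indexed by all $(i,j,k)\in\mathbb{Z}^3$ such that $(i+a,j+b)$ is a box of $\lambda$ for some $a,b\in\{0,1,2\}$ and $0\le k\le\min(i,j)+1$. Its entries are: $u_{i,j,0}=0$ and $u_{i,j,\min(i,j)+1}=0$, and for $0<k<\min(i,j)+1$, \[u_{ijk}=\min(u_{i-1,j,k-1},u_{i,j-1,k-1})+\max(u_{i-1,j,k},u_{i,j-1,k})-u_{i-1,j-1,k-1}+t_{ijk},\] where $t_{ij1}=t_{ij}$ if $(i,j)\in\lambda$ (and $0$ otherwise) and $t_{ijk}=0$ for $k\ne1$. *)

From mathcomp Require Import all_boot all_order all_algebra.
Set Implicit Arguments. Unset Strict Implicit. Unset Printing Implicit Defensive.
Import Order.TTheory GRing.Theory Num.Theory.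
Local Open Scope ring_scope.

(* A partition lambda is a weakly decreasing list of row lengths
   (lambda_1 >= lambda_2 >= ...); trailing zero parts are harmless. *)
Definition is_partition (lam : seq nat) : bool := sorted geq lam.

(* Boxes use 1-based matrix coordinates: (i,j) is a box iff
   i >= 1, j >= 1 and j <= lambda_i. *)
Definition in_shape (lam : seq nat) (b : nat * nat) : bool :=
  [&& (0 < b.1)%N, (0 < b.2)%N & (b.2 <= nth 0%N lam b.1.-1)%N].

Definition border_box (lam : seq nat) (i j : nat) : bool :=
  in_shape lam (i, j) && ~~ in_shape lam (i.+1, j.+1).

(* An N-tableau of shape lambda is a function T : nat -> nat -> nat;
   only its values on boxes of lambda are used. *)

(* A valid build order of lambda: a duplicate-free enumeration of the boxes
   of lambda such that every prefix is a Young diagram (down-closed set of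
   boxes); hence each added box is a corner box of the new shape. *)
Definition build_order (lam : seq nat) (s : seq (nat * nat)) : Prop :=
  [/\ uniq s,
      (forall b, (b \in s) = in_shape lam b) &
      (forall n a b a' b', (a, b) \in take n s ->
          (0 < a')%N -> (0 < b')%N -> (a' <= a)%N -> (b' <= b)%N ->
          (a', b') \in take n s)].

(* One step: current shape sh (list of boxes) with entries f (the toggled
   tableau of the current tableau); add corner box (i,j) with entry x. *)
Definition toggle_step (sh : seq (nat * nat)) (f : nat -> nat -> int)
    (i j : nat) (x : nat) : nat -> nat -> int :=
  let g a b := if (a, b) \in sh then f a b else 0 in
  fun a b =>
    if (a == i) && (b == j) then
      Num.max (g i.-1 j) (g i j.-1) + x%:Z
    else if [&& (0 < a)%N, (0 < b)%N, (a < i)%N, (b < j)%N & (i - a == j - b)%N]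
    then (* k = i - a, 1 <= k < min(i,j):
            alpha_{k+1} = g (a-1) b, gamma_{k+1} = g a (b-1),
            alpha_k = g a (b+1), gamma_k = g (a+1) b, beta_k = g a b *)
      Num.max (g a.-1 b) (g a b.-1) + Num.min (g a b.+1) (g a.+1 b) - g a b
    else g a b.

Definition toggle_fold (T : nat -> nat -> nat)
    (st : seq (nat * nat) * (nat -> nat -> int)) (bx : nat * nat) :=
  (rcons st.1 bx, toggle_step st.1 st.2 bx.1 bx.2 (T bx.1 bx.2)).

(* The toggle image of T built along the order s (starting from the empty
   tableau, whose entries are all 0); entries outside the shape read 0. *)
Definition toggle (T : nat -> nat -> nat) (s : seq (nat * nat)) : nat -> nat -> int :=
  let st := foldl (toggle_fold T) ([::], fun _ _ => 0) s in
  fun a b => if (a, b) \in st.1 then st.2 a b else 0.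

(* u_{ijk} for i, j, k >= 0; u_{i,j,0} = 0 and u_{i,j,k} = 0 for
   k >= min(i,j)+1 (the paper only uses k = min(i,j)+1). The recursion is
   well-founded on i + j (fuel n). *)
Fixpoint uaux (lam : seq nat) (T : nat -> nat -> nat) (n i j k : nat) : int :=
  match n with
  | 0%N => 0
  | n'.+1 =>
      if (k == 0%N) || (minn i j < k)%N then 0 else
      let t := if (k == 1%N) && in_shape lam (i, j) then (T i j)%:Z else 0 in
      Num.min (uaux lam T n' i.-1 j k.-1) (uaux lam T n' i j.-1 k.-1)
      + Num.max (uaux lam T n' i.-1 j k) (uaux lam T n' i j.-1 k)
      - uaux lam T n' i.-1 j.-1 k.-1 + t
  end.

Definition U (lam : seq nat) (T : nat -> nat -> nat) (i j k : nat) : int :=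
  uaux lam T (i + j) i j k.

From mathcomp Require Import all_boot all_order all_algebra.
From mathcomp Require Import zify.
Import Order.TTheory GRing.Theory Num.Theory.
Local Open Scope ring_scope.

(* Build the toggled tableau box by box along the build order and
   maintain the invariant that every entry at (a, b) equals u_{a+m, b+m, m+1},
   where (a+m, b+m) is the end of the diagonal of (a, b) in the current shape.
   Adding a corner (i, j) moves the end of exactly the diagonal through (i, j)
   from (i-1, j-1) to (i, j), and the toggle formulas at (i-k, j-k) are then
   literally the recursion defining u_{i,j,k+1} in terms of the (unchanged)
   entries ending at (i-1, j), (i, j-1) and (i-1, j-1). *)

Lemma uaux_enough_fuel lam T n n' i j k :
  (i + j <= n)%N -> (i + j <= n')%N -> uaux lam T n i j k = uaux lam T n' i j k.
Proof.
elim: n n' i j k => [|n IH] [|n'] i j k h h' //=.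
- have [-> ->] : i = 0%N /\ j = 0%N by lia.
  by case: k.
- have [-> ->] : i = 0%N /\ j = 0%N by lia.
  by case: k.
case: ifP => // /norP[k0]; rewrite -leqNgt => km.
by rewrite !(IH n') //; lia.
Qed.

Lemma U_rec lam T i j k : U lam T i j k =
  if (k == 0%N) || (minn i j < k)%N then 0 else
  Num.min (U lam T i.-1 j k.-1) (U lam T i j.-1 k.-1)
  + Num.max (U lam T i.-1 j k) (U lam T i j.-1 k)
  - U lam T i.-1 j.-1 k.-1
  + (if (k == 1%N) && in_shape lam (i, j) then (T i j)%:Z else 0).
Proof.
rewrite /U; case: ifP => [|/norP[k0]]; first by case: (i + j)%N => //= n ->.
rewrite -leqNgt => km.
have -> : (i + j = (i + j).-1.+1)%N by lia.
rewrite /= (negbTE k0) ltnNge km /=.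
have fuel a b c : (a + b <= (i + j).-1)%N ->
    uaux lam T (i + j).-1 a b c = uaux lam T (a + b) a b c.
  by move=> ab; apply: uaux_enough_fuel.
by rewrite !fuel //; lia.
Qed.

Lemma U_gt_min lam T i j k : (minn i j < k)%N -> U lam T i j k = 0.
Proof. by move=> ltk; rewrite U_rec ltk orbT. Qed.

Lemma U_0 lam T i j : U lam T i j 0 = 0.
Proof. by rewrite U_rec. Qed.

Lemma U_rec1 lam T i j : in_shape lam (i, j) ->
  U lam T i j 1 = Num.max (U lam T i.-1 j 1) (U lam T i j.-1 1) + (T i j)%:Z.
Proof.
move=> ij_box; have /and3P[/= i0 j0 _] := ij_box.
rewrite U_rec /= ij_box ltnNge (_ : 0 < minn i j)%N; last by lia.
by rewrite /= !U_0 minxx add0r subr0.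
Qed.

Lemma U_recS lam T i j k : (0 < k)%N -> (k < minn i j)%N ->
  U lam T i j k.+1 = Num.max (U lam T i.-1 j k.+1) (U lam T i j.-1 k.+1)
    + Num.min (U lam T i.-1 j k) (U lam T i j.-1 k) - U lam T i.-1 j.-1 k.
Proof.
move=> k_pos k_lt; rewrite U_rec /= ltnNge k_lt.
have -> : (k.+1 == 1%N) = false by lia.
by rewrite /= addr0 (addrC (Num.min _ _)).
Qed.

Definition positive_boxes (p : seq (nat * nat)) : Prop :=
  forall a b, (a, b) \in p -> (0 < a)%N /\ (0 < b)%N.

Definition down_closed (p : seq (nat * nat)) : Prop :=
  forall a b a' b', (a, b) \in p ->
    (0 < a')%N -> (0 < b')%N -> (a' <= a)%N -> (b' <= b)%N -> (a', b') \in p.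

Definition entry (p : seq (nat * nat)) (f : nat -> nat -> int) (a b : nat) : int :=
  if (a, b) \in p then f a b else 0.

Definition agrees_with_U lam T (p : seq (nat * nat)) (f : nat -> nat -> int) :=
  forall a b m, (a, b) \in p -> (a + m, b + m)%N \in p ->
    ((a + m).+1, (b + m).+1)%N \notin p -> f a b = U lam T (a + m)%N (b + m)%N m.+1.

Lemma toggle_stepE p f i j x a b : toggle_step p f i j x a b =
  if (a == i) && (b == j) then Num.max (entry p f i.-1 j) (entry p f i j.-1) + x%:Z
  else if [&& (0 < a)%N, (0 < b)%N, (a < i)%N, (b < j)%N & (i - a == j - b)%N]
  then Num.max (entry p f a.-1 b) (entry p f a b.-1)
       + Num.min (entry p f a b.+1) (entry p f a.+1 b) - entry p f a b
  else entry p f a b.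
Proof. by []. Qed.

Lemma diag_end_unique p a b m m' : down_closed p ->
  (a + m, b + m)%N \in p -> ((a + m).+1, (b + m).+1)%N \notin p ->
  (a + m', b + m')%N \in p -> ((a + m').+1, (b + m').+1)%N \notin p -> m = m'.
Proof.
move=> dc_p in_m out_m in_m' out_m'.
have below n n' : (a + n', b + n')%N \in p -> ((a + n).+1, (b + n).+1)%N \notin p ->
    (n' <= n)%N.
  move=> in_n' out_n; rewrite leqNgt; apply/negP => lt_n.
  by case/negP: out_n; apply: dc_p in_n' _ _ _ _; lia.
by apply/eqP; rewrite eqn_leq !below.
Qed.

(* For m = minn x y the box (c, d) lies on an axis and both sides are 0. *)
Lemma entry_diag lam T p f x y c d m :
  positive_boxes p -> down_closed p -> agrees_with_U lam T p f ->
  ((0 < minn x y)%N -> (x, y) \in p) -> (x.+1, y.+1) \notin p ->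
  x = (c + m)%N -> y = (d + m)%N -> (m <= minn x y)%N ->
  entry p f c d = U lam T x y m.+1.
Proof.
move=> pos_p dc_p f_U xy_in xy_end ex ey m_le; subst x y.
have [m_lt|m_eq] := ltnP m (minn (c + m)%N (d + m)%N).
  have xy_p : (c + m, d + m)%N \in p by apply: xy_in; lia.
  have cd_p : (c, d) \in p by apply: dc_p xy_p _ _ _ _; lia.
  by rewrite /entry cd_p; apply: f_U.
rewrite U_gt_min /entry; last lia.
by case: ifP => // /pos_p; lia.
Qed.

Section ToggleStep.

Variables (lam : seq nat) (T : nat -> nat -> nat).
Variables (p : seq (nat * nat)) (f : nat -> nat -> int) (i j : nat).

Hypothesis pos_q : positive_boxes (rcons p (i, j)).
Hypothesis dc_p : down_closed p.
Hypothesis dc_q : down_closed (rcons p (i, j)).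
Hypothesis ij_new : (i, j) \notin p.
Hypothesis ij_box : in_shape lam (i, j).
Hypothesis f_U : agrees_with_U lam T p f.

Let pos_p : positive_boxes p.
Proof. by move=> a b ab_p; apply: pos_q; rewrite mem_rcons in_cons ab_p orbT. Qed.

Let ij_pos : (0 < i)%N /\ (0 < j)%N.
Proof. by apply: pos_q; rewrite mem_rcons mem_head. Qed.

Let no_box_SE c d : (c, d) \in p -> (i <= c)%N -> (j <= d)%N -> False.
Proof. by move=> cd_p ic jd; case/negP: ij_new; apply: dc_p cd_p _ _ _ _; lia. Qed.

Let box_NW_in_p c d : (0 < c)%N -> (0 < d)%N -> (c <= i)%N -> (d <= j)%N ->
  (c, d) != (i, j) -> (c, d) \in p.
Proof.
move=> c0 d0 ci dj ne.
have := dc_q i j c d; rewrite mem_rcons mem_head => /(_ isT c0 d0 ci dj).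
by rewrite mem_rcons in_cons (negbTE ne).
Qed.

Let ij_end : (i, j) \in rcons p (i, j) /\ (i.+1, j.+1) \notin rcons p (i, j).
Proof.
rewrite !mem_rcons mem_head in_cons xpair_eqE; split=> //.
by apply/norP; split; [lia | apply/negP => /no_box_SE; lia].
Qed.

Let entry_diag_p x y c d m : (x <= i)%N -> (y <= j)%N -> (x, y) != (i, j) ->
  (i <= x.+1)%N -> (j <= y.+1)%N ->
  x = (c + m)%N -> y = (d + m)%N -> (m <= minn x y)%N ->
  entry p f c d = U lam T x y m.+1.
Proof.
move=> xi yj ne ix jy; apply: entry_diag => //.
- by move=> xy_pos; apply: box_NW_in_p => //; lia.
- by apply/negP => /no_box_SE; lia.
Qed.

Lemma toggle_step_new_box : toggle_step p f i j (T i j) i j = U lam T i j 1.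
Proof.
rewrite toggle_stepE !eqxx /= U_rec1 //.
by rewrite (@entry_diag_p i.-1 j _ _ 0) ?(@entry_diag_p i j.-1 _ _ 0) ?xpair_eqE //; lia.
Qed.

Lemma toggle_step_diag a b : (0 < a)%N -> (0 < b)%N -> (a < i)%N -> (b < j)%N ->
  (i - a = j - b)%N -> toggle_step p f i j (T i j) a b = U lam T i j (i - a).+1.
Proof.
move=> a0 b0 ai bj diag.
rewrite toggle_stepE (_ : a == i = false) /=; last by lia.
rewrite a0 b0 ai bj {1}diag eqxx /= U_recS; try lia.
have k_pos : (0 < i - a)%N by lia.
rewrite (@entry_diag_p i.-1 j a.-1 b (i - a)) ?(@entry_diag_p i j.-1 a b.-1 (i - a))
  ?(@entry_diag_p i.-1 j a b.+1 (i - a).-1) ?(@entry_diag_p i j.-1 a.+1 b (i - a).-1)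
  ?(@entry_diag_p i.-1 j.-1 a b (i - a).-1) ?prednK ?xpair_eqE //; lia.
Qed.

Lemma toggle_step_agrees :
  agrees_with_U lam T (rcons p (i, j)) (toggle_step p f i j (T i j)).
Proof.
have [ij_q ij_out] := ij_end.
move=> a b m ab_q end_q end_out.
have end_at_ij : (a <= i)%N -> (b <= j)%N -> (i - a = j - b)%N -> m = (i - a)%N.
  move=> ai bj diag; have b_end : (b + (i - a))%N = j by lia.
  by apply: (@diag_end_unique _ a b m _ dc_q); rewrite ?subnKC ?b_end.
have [[ea eb]|ne] := eqVneq (a, b) (i, j).
  subst a b; have -> : m = 0%N by rewrite end_at_ij ?subnn.
  by rewrite !addn0; exact: toggle_step_new_box.
have [a0 b0] := pos_q _ _ ab_q.
have [diag|off_diag] :=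
  boolP [&& (0 < a)%N, (0 < b)%N, (a < i)%N, (b < j)%N & (i - a == j - b)%N].
  case/and5P: diag => _ _ ai bj /eqP diag.
  have -> : m = (i - a)%N by apply: end_at_ij; lia.
  have -> : (b + (i - a))%N = j by lia.
  rewrite subnKC; last exact: ltnW.
  exact: toggle_step_diag.
have ab_p : (a, b) \in p by move: ab_q; rewrite mem_rcons in_cons (negbTE ne).
rewrite toggle_stepE -xpair_eqE (negbTE ne) (negbTE off_diag) /entry ab_p.
apply: f_U => //.
  move: end_q; rewrite mem_rcons in_cons xpair_eqE => /orP[/andP[/eqP ei /eqP ej]|//].
  case/negP: off_diag; case: m ei ej {end_out end_at_ij} => [|m] ei ej.
    by case/eqP: ne; rewrite -ei -ej !addn0.
  by rewrite a0 b0 /=; lia.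
by apply: contra end_out; rewrite mem_rcons in_cons => ->; rewrite orbT.
Qed.

End ToggleStep.

Lemma toggle_fold_take lam T s n : build_order lam s ->
  let st := foldl (toggle_fold T) ([::], fun _ _ => 0) (take n s) in
  st.1 = take n s /\ agrees_with_U lam T (take n s) st.2.
Proof.
case=> uniq_s mem_s dc_s; elim: n => [|n [IH1 IH2]] /=; first by rewrite take0.
have [n_lt|n_ge] := ltnP n (size s); last first.
  by rewrite !take_oversize ?(leq_trans n_ge) in IH1 IH2 *.
rewrite (take_nth (0%N, 0%N) n_lt) foldl_rcons /toggle_fold IH1; split=> //=.
have := mem_nth (0%N, 0%N) n_lt; have := take_uniq n.+1 uniq_s.
have := dc_s n.+1; rewrite (take_nth (0%N, 0%N) n_lt).
case: (nth _ s n) => x y /= dc_q; rewrite rcons_uniq => /andP[xy_new _] xy_s.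
have pos_s a b : (a, b) \in s -> (0 < a)%N /\ (0 < b)%N.
  by rewrite mem_s /in_shape /= => /and3P[].
apply: toggle_step_agrees => //; last by rewrite -mem_s.
- by move=> a b; rewrite mem_rcons in_cons => /orP[/eqP[-> ->]|/mem_take]; exact: pos_s.
- by move=> a b a' b' ab_p; apply: dc_s; rewrite ab_p.
Qed.

Theorem proposition4p2 (lam : seq nat) (T : nat -> nat -> nat)
    (s : seq (nat * nat)) (i j m : nat) :
  is_partition lam -> build_order lam s ->
  in_shape lam (i, j) -> border_box lam (i + m) (j + m) ->
  toggle T s i j = U lam T (i + m) (j + m) m.+1.
Proof.
move=> _ build ij_box /andP[end_box end_out].
have [shape_s agree_s] := toggle_fold_take lam T s (size s) build.
rewrite take_size in shape_s agree_s.
have [_ mem_s _] := build.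
by rewrite /toggle shape_s mem_s ij_box; apply: agree_s; rewrite ?mem_s.
Qed.
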